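(* For $k\ge4$ let $$E_k(n)=\frac{\gamma_k}{(1-\tau_k)^2}\,\rho_k^{-n}\,n^{-3/2},\qquad\text{where }\ \gamma_k=\sqrt{\frac{\rho_k}{2\pi\Lambda_k''(\tau_k)}}.$$ By Theorem 4.1, $E_k(n)$ is the asymptotic equivalent of $P^{(k)}_n$ as $n\to\infty$ for each fixed $k$. There exist a constant $C>0$ and an integer $K$ such that for all $k\ge K$ and all $n\ge1$, $$E_k(n)\le\frac{1}{(1-\frac{e}{k})^2}\sqrt{\frac{e}{4\pi k}}\left(\frac{k}{e}\right)^n\left(1+\frac52\frac{\log k}{k}+\frac{C}{k}\right)^n n^{-3/2}.$$
   Context: Let $s_j$ be the number of simple permutations of size $j$. A permutation is simple if its only intervals (factors whose value set is a set of consecutive integers) are the singletons and the whole permutation, with the convention that the permutations of sizes $1$ and $2$ are not simple. For $k\ge4$, let $$\Lambda_k(x)=\frac{x^2}{1-x}+\sum_{j=4}^k s_j\left(\frac{x}{1-x}\right)^j\qquad(0\le x<1).$$ Let $\tau_k$ be the unique solution in $(0,1)$ of $\Lambda_k'(x)=1$, and set $\rho_k=\tau_k-\Lambda_k(\tau_k)$. Let $U^{(k)}(z)$ be the formal power series with $U^{(k)}(0)=0$ and $U^{(k)}=z+\Lambda_k(U^{(k)})$, and let $P^{(k)}_n=[z^n]\dfrac{U^{(k)}(z)}{1-U^{(k)}(z)}$. Combinatorially, $P^{(k)}_n$ is the number of permutations of size $n$ whose strong interval tree has no prime node of arity larger than $k$. *)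

From mathcomp Require Import all_boot all_fingroup.
Set Implicit Arguments. Unset Strict Implicit. Unset Printing Implicit Defensive.

Definition is_interval (j : nat) (p : 'S_j) (a l : nat) : bool :=
  [&& 0 < l, a + l <= j &
      [exists m : 'I_j.+1,
         [set p i | i : 'I_j & (a <= i) && (i < a + l)] ==
         [set x : 'I_j | (m <= x) && (x < m + l)]]].

(* simple: only intervals are singletons and the whole permutation;
   by convention permutations of size 1 and 2 (and 0) are not simple. *)
Definition simple_perm (j : nat) (p : 'S_j) : bool :=
  (2 < j) &&
  [forall a : 'I_j.+1, forall l : 'I_j.+1,
     is_interval p a l ==> ((l == 1 :> nat) || (l == j :> nat))].

Definition s_simple (j : nat) : nat := #|[set p : 'S_j | simple_perm p]|.

From Stdlib Require Import Reals.
Open Scope R_scope.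

Definition Lambda (k : nat) (x : R) : R :=
  x ^ 2 / (1 - x) +
  sum_f_R0 (fun i => INR (s_simple (i + 4)) * (x / (1 - x)) ^ (i + 4))
           (k - 4).

(* Lambda_k is convex with Lambda_k'' >= 2.  At the saddle point tau_k, where Lambda_k' = 1,
   rho_k = tau_k - Lambda_k(tau_k) is therefore the maximum of x - Lambda_k(x) on [0,1);
   moreover tau_k <= 2 rho_k and rho_k <= 1/4, so that
     E_k(n) <= (4 pi)^(-1/2) rho_k^(1/2 - n) (1 - 2 rho_k)^(-2) n^(-3/2)
   and everything reduces to a lower bound on rho_k.  Evaluate x - Lambda_k(x) where
   x/(1-x) = (e/k) k^(-5/(2k)) and use s_j <= j! <= e j^(j+1/2) e^(-j): the polynomial part
   of Lambda_k contributes O(1/k^2), because the terms with j >= k/3 decay geometrically in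
   k - j while the others are dominated by the j = 4 term.  Hence
   rho_k >= (e/k) (1 - (5/2) log k / k - 12/k).  The factor k^(-5/(2k)) is what makes the terms
   with j close to k of size O(1/k^2) despite the sqrt(j) in the Stirling estimate; it costs
   exactly the (5/2) log k / k of the statement. *)

From Stdlib Require Import Reals Lra Lia Psatz Factorial.
From mathcomp Require all_boot all_fingroup.
From Coquelicot Require Import Coquelicot.
Open Scope R_scope.

Section SimpleCount.
Import all_boot all_fingroup.

Lemma s_simple_le_fact (j : nat) : (s_simple j <= Factorial.fact j)%coq_nat.
Proof.
have -> : Factorial.fact j = j`! by elim: j => [//|j IH]; rewrite factS -IH.
by apply/leP; rewrite /s_simple -card_Sn; apply: max_card.
Qed.

End SimpleCount.

Lemma exp_le (x y : R) : x <= y -> exp x <= exp y.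
Proof. intros [Hlt | ->]; [apply Rlt_le, exp_increasing, Hlt | lra]. Qed.

Lemma ln_le_sub_1 (x : R) : 0 < x -> ln x <= x - 1.
Proof. intros Hx. pose proof (exp_ineq1_le (ln x)). rewrite exp_ln in *; lra. Qed.

Lemma exp_pow (x : R) (n : nat) : exp x ^ n = exp (INR n * x).
Proof.
  induction n as [|n IH]; [simpl; rewrite Rmult_0_l, exp_0; reflexivity|].
  rewrite S_INR, <- tech_pow_Rmult, IH, <- exp_plus. f_equal. ring.
Qed.

Lemma tangent_le_of_deriv_nondecr (f f' : R -> R) (a b x t : R) :
  (forall z, a <= z <= b -> derivable_pt_lim f z (f' z)) ->
  (forall u v, a <= u -> u <= v -> v <= b -> f' u <= f' v) ->
  a <= x <= b -> a <= t <= b -> f t + f' t * (x - t) <= f x.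
Proof.
  intros Hd Hmono Hx Ht.
  destruct (Rtotal_order x t) as [Hxt|[->|Htx]]; [| lra |].
  - destruct (MVT_cor2 f f' x t Hxt ltac:(intros; apply Hd; lra)) as [c [Hc Hcx]].
    pose proof (Hmono c t ltac:(lra) ltac:(lra) ltac:(lra)). nra.
  - destruct (MVT_cor2 f f' t x Htx ltac:(intros; apply Hd; lra)) as [c [Hc Hcx]].
    pose proof (Hmono t c ltac:(lra) ltac:(lra) ltac:(lra)). nra.
Qed.

Lemma deriv_ge_of_increment_ge (g : R -> R) (t l m d : R) :
  derivable_pt_lim g t l -> 0 < d ->
  (forall h, 0 < h < d -> m * h <= g (t + h) - g t) -> m <= l.
Proof.
  intros Hg Hd Hinc. apply Rnot_lt_le; intros Hlt.
  destruct (Hg (m - l) ltac:(lra)) as [[e He] Hlim].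
  set (h := Rmin (e / 2) (d / 2)).
  assert (Hh : 0 < h <= e / 2 /\ h <= d / 2)
    by (unfold h; repeat split; [apply Rmin_pos; lra | apply Rmin_l | apply Rmin_r]).
  specialize (Hlim h ltac:(lra) ltac:(simpl; rewrite Rabs_right; lra)).
  specialize (Hinc h ltac:(lra)).
  apply Rabs_def2 in Hlim.
  assert (m <= (g (t + h) - g t) / h).
  { apply Rmult_le_reg_r with h; [lra|]. unfold Rdiv; rewrite Rmult_assoc, Rinv_l; lra. }
  lra.
Qed.

Lemma sum_f_R0_derivable (f f' : nat -> R -> R) (N : nat) (x : R) :
  (forall i, derivable_pt_lim (f i) x (f' i x)) ->
  derivable_pt_lim (fun x => sum_f_R0 (fun i => f i x) N) x (sum_f_R0 (fun i => f' i x) N).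
Proof.
  intros Hf. induction N as [|N IH]; [apply Hf|].
  exact (derivable_pt_lim_plus _ (f (S N)) x _ _ IH (Hf (S N))).
Qed.

Lemma sum_pow_rev_le (r : R) (N : nat) : 0 <= r < 1 ->
  sum_f_R0 (fun i => r ^ (N - i)) N <= / (1 - r).
Proof.
  intros Hr. induction N as [|N IH].
  - simpl. apply Rmult_le_reg_r with (1 - r); [lra|]. rewrite Rinv_l; lra.
  - rewrite tech5, Nat.sub_diag, pow_O.
    replace (sum_f_R0 (fun i => r ^ (S N - i)) N) with (r * sum_f_R0 (fun i => r ^ (N - i)) N).
    + assert (r * sum_f_R0 (fun i => r ^ (N - i)) N <= r * / (1 - r))
        by (apply Rmult_le_compat_l; lra).
      assert (r * / (1 - r) + 1 = / (1 - r)) by (field; lra). lra.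
    + rewrite scal_sum. apply sum_eq. intros i Hi.
      replace (S N - i)%nat with (S (N - i)) by lia. simpl. ring.
Qed.

Definition pow4_series (c : nat -> R) (N : nat) (y : R) : R :=
  sum_f_R0 (fun i => c i * y ^ (i + 4)) N.

Definition pow4_series' (c : nat -> R) (N : nat) (y : R) : R :=
  sum_f_R0 (fun i => c i * (INR (i + 4) * y ^ (i + 3))) N.

Definition Lambda_c (c : nat -> R) (N : nat) (x : R) : R :=
  x ^ 2 / (1 - x) + pow4_series c N (x / (1 - x)).

Definition dLambda_c (c : nat -> R) (N : nat) (x : R) : R :=
  (1 + pow4_series' c N (x / (1 - x))) / (1 - x) ^ 2 - 1.

Definition s_coef (i : nat) : R := INR (s_simple (i + 4)).

Lemma s_coef_ge0 (i : nat) : 0 <= s_coef i.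
Proof. apply pos_INR. Qed.

Lemma Lambda_as_Lambda_c (k : nat) :
  Lambda k = Lambda_c s_coef (k - 4).
Proof. reflexivity. Qed.

Lemma inv_sq_one_minus_incr (t z : R) : 0 <= t <= z -> z < 1 ->
  / (1 - t) ^ 2 + 2 * (z - t) <= / (1 - z) ^ 2.
Proof.
  intros Htz Hz.
  set (a := 1 - z); set (b := 1 - t).
  assert (Ha : 0 < a <= b) by (unfold a, b; lra). assert (Hb : b <= 1) by (unfold b; lra).
  replace (z - t) with (b - a) by (unfold a, b; ring).
  assert (E : / a ^ 2 - / b ^ 2 = (b - a) * ((a + b) / (a ^ 2 * b ^ 2)))
    by (field; lra).
  assert (Hab : a ^ 2 * b ^ 2 <= a * b)
    by (assert (0 < a * b) by nra; assert (a * b <= 1) by nra; nra).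
  assert (Hpos : 0 < a ^ 2 * b ^ 2) by (apply Rmult_lt_0_compat; apply pow_lt; lra).
  assert (2 <= (a + b) / (a ^ 2 * b ^ 2)).
  { apply Rmult_le_reg_r with (a ^ 2 * b ^ 2); [exact Hpos|].
    unfold Rdiv; rewrite Rmult_assoc, Rinv_l by lra. nra. }
  nra.
Qed.

Section LambdaC.

Variables (c : nat -> R) (N : nat).
Hypothesis c_ge0 : forall i, 0 <= c i.

Lemma derivable_pow4_series (y : R) :
  derivable_pt_lim (pow4_series c N) y (pow4_series' c N y).
Proof.
  apply (sum_f_R0_derivable (fun i y => c i * y ^ (i + 4))
           (fun i y => c i * (INR (i + 4) * y ^ (i + 3)))).
  intros i. apply is_derive_Reals. auto_derive; [easy|].
  replace (Init.Nat.pred (i + 4)) with (i + 3)%nat by lia. ring.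
Qed.

Lemma pow4_series_ge0 (y : R) : 0 <= y -> 0 <= pow4_series c N y.
Proof.
  intros Hy. apply cond_pos_sum. intros i.
  apply Rmult_le_pos; [apply c_ge0 | apply pow_le, Hy].
Qed.

Lemma pow4_series'_ge0 (y : R) : 0 <= y -> 0 <= pow4_series' c N y.
Proof.
  intros Hy. apply cond_pos_sum. intros i.
  apply Rmult_le_pos; [apply c_ge0 | apply Rmult_le_pos; [apply pos_INR | apply pow_le, Hy]].
Qed.

Lemma pow4_series'_le (y z : R) : 0 <= y <= z -> pow4_series' c N y <= pow4_series' c N z.
Proof.
  intros Hyz. apply sum_growing. intros i.
  apply Rmult_le_compat_l; [apply c_ge0|].
  apply Rmult_le_compat_l; [apply pos_INR | apply pow_incr, Hyz].
Qed.

Lemma pow4_series_euler (y : R) : 0 <= y -> 4 * pow4_series c N y <= y * pow4_series' c N y.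
Proof.
  intros Hy. unfold pow4_series, pow4_series'. rewrite !scal_sum.
  apply sum_growing. intros i.
  replace (c i * (INR (i + 4) * y ^ (i + 3)) * y) with (c i * y ^ (i + 4) * INR (i + 4))
    by (replace (i + 4)%nat with (S (i + 3)) by lia; simpl; ring).
  apply Rmult_le_compat_l.
  - apply Rmult_le_pos; [apply c_ge0 | apply pow_le, Hy].
  - rewrite plus_INR. pose proof (pos_INR i). simpl. lra.
Qed.

Lemma derivable_Lambda_c (x : R) : x < 1 ->
  derivable_pt_lim (Lambda_c c N) x (dLambda_c c N x).
Proof.
  intros Hx.
  assert (Hsq : derivable_pt_lim (fun x => x ^ 2 / (1 - x)) x ((2 * x - x ^ 2) / (1 - x) ^ 2))
    by (apply is_derive_Reals; auto_derive; [lra | field; lra]).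
  assert (Hphi : derivable_pt_lim (fun x => x / (1 - x)) x (/ (1 - x) ^ 2))
    by (apply is_derive_Reals; auto_derive; [lra | field; lra]).
  replace (dLambda_c c N x)
    with ((2 * x - x ^ 2) / (1 - x) ^ 2 + pow4_series' c N (x / (1 - x)) * / (1 - x) ^ 2)
    by (unfold dLambda_c; field; lra).
  apply (derivable_pt_lim_plus _ (comp (pow4_series c N) (fun x => x / (1 - x)))); [exact Hsq|].
  apply derivable_pt_lim_comp; [exact Hphi | apply derivable_pow4_series].
Qed.

Lemma dLambda_c_incr (t z : R) : 0 <= t <= z -> z < 1 ->
  dLambda_c c N t + 2 * (z - t) <= dLambda_c c N z.
Proof.
  intros Htz Hz. unfold dLambda_c.
  pose proof (inv_sq_one_minus_incr t z Htz Hz) as Hinv.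
  assert (Hy : 0 <= t / (1 - t) <= z / (1 - z)).
  { split; [apply Rmult_le_pos; [lra | apply Rlt_le, Rinv_0_lt_compat; lra]|].
    apply Rmult_le_reg_r with ((1 - t) * (1 - z)); [nra|].
    replace (t / (1 - t) * ((1 - t) * (1 - z))) with (t * (1 - z)) by (field; lra).
    replace (z / (1 - z) * ((1 - t) * (1 - z))) with (z * (1 - t)) by (field; lra). nra. }
  pose proof (pow4_series'_ge0 _ (proj1 Hy)) as Hg0.
  pose proof (pow4_series'_le _ _ Hy) as Hg.
  assert (Hu : 0 < / (1 - t) ^ 2) by (apply Rinv_0_lt_compat, pow_lt; lra).
  unfold Rdiv. nra.
Qed.

Lemma Lambda_c_tangent (x t : R) : 0 <= x < 1 -> 0 <= t < 1 ->
  Lambda_c c N t + dLambda_c c N t * (x - t) <= Lambda_c c N x.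
Proof.
  intros Hx Ht.
  assert (Hb : x <= Rmax x t /\ t <= Rmax x t /\ Rmax x t < 1)
    by (split; [apply Rmax_l | split; [apply Rmax_r | apply Rmax_lub_lt; lra]]).
  apply (tangent_le_of_deriv_nondecr _ _ 0 (Rmax x t)); try lra.
  - intros z Hz. apply derivable_Lambda_c. lra.
  - intros u v Hu Huv Hv. pose proof (dLambda_c_incr u v ltac:(lra) ltac:(lra)). lra.
Qed.

Lemma Lambda_c_euler (t : R) : 0 <= t < 1 -> 2 * Lambda_c c N t <= t * dLambda_c c N t.
Proof.
  intros Ht. unfold Lambda_c, dLambda_c.
  set (y := t / (1 - t)).
  assert (Hy : 0 <= y) by (apply Rmult_le_pos; [lra | apply Rlt_le, Rinv_0_lt_compat; lra]).
  pose proof (pow4_series_euler _ Hy) as He.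
  pose proof (pow4_series'_ge0 _ Hy) as Hg.
  assert (E1 : t * ((1 + pow4_series' c N y) / (1 - t) ^ 2 - 1)
               = y * (1 + y) * (1 + pow4_series' c N y) - t) by (unfold y; field; lra).
  assert (E2 : t ^ 2 / (1 - t) = t * y) by (unfold y; field; lra).
  assert (E3 : y + y ^ 2 - t - 2 * (t * y) = t ^ 3 / (1 - t) ^ 2) by (unfold y; field; lra).
  assert (0 <= t ^ 3 / (1 - t) ^ 2)
    by (apply Rmult_le_pos; [apply pow_le; lra | apply Rlt_le, Rinv_0_lt_compat, pow_lt; lra]).
  rewrite E1, E2. nra.
Qed.

Lemma Lambda_c_ge_sq (t : R) : 0 <= t < 1 -> t ^ 2 <= Lambda_c c N t.
Proof.
  intros Ht. unfold Lambda_c.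
  pose proof (pow4_series_ge0 (t / (1 - t))
    ltac:(apply Rmult_le_pos; [lra | apply Rlt_le, Rinv_0_lt_compat; lra])).
  assert (t ^ 2 <= t ^ 2 / (1 - t)).
  { apply Rmult_le_reg_r with (1 - t); [lra|].
    replace (t ^ 2 / (1 - t) * (1 - t)) with (t ^ 2) by (field; lra). nra. }
  lra.
Qed.

Lemma Lambda_c_saddle (t : R) : 0 <= t < 1 -> dLambda_c c N t = 1 ->
  t <= 2 * (t - Lambda_c c N t) /\ t - Lambda_c c N t <= 1 / 4.
Proof.
  intros Ht Hd.
  pose proof (Lambda_c_euler t Ht). pose proof (Lambda_c_ge_sq t Ht).
  rewrite Hd in *. pose proof (pow2_ge_0 (t - / 2)). split; nra.
Qed.

Lemma derivative_Lambda_c_eq (L1 : R -> R) :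
  (forall x, 0 < x < 1 -> derivable_pt_lim (Lambda_c c N) x (L1 x)) ->
  forall x, 0 < x < 1 -> L1 x = dLambda_c c N x.
Proof.
  intros HL1 x Hx. apply (uniqueness_limite (Lambda_c c N) x); [apply HL1, Hx|].
  apply derivable_Lambda_c; lra.
Qed.

Lemma Lambda_c_second_deriv_ge (L1 : R -> R) (t l : R) :
  (forall x, 0 < x < 1 -> derivable_pt_lim (Lambda_c c N) x (L1 x)) -> 0 < t < 1 ->
  derivable_pt_lim L1 t l -> 2 <= l.
Proof.
  intros HL1 Ht Hl. apply (deriv_ge_of_increment_ge L1 t l 2 (1 - t) Hl); [lra|].
  intros h Hh. rewrite !(derivative_Lambda_c_eq L1 HL1) by lra.
  pose proof (dLambda_c_incr t (t + h) ltac:(lra) ltac:(lra)). lra.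
Qed.

End LambdaC.

Lemma pow4_series_coef_le (c c' : nat -> R) (N : nat) (y : R) :
  (forall i, c i <= c' i) -> 0 <= y -> pow4_series c N y <= pow4_series c' N y.
Proof.
  intros Hc Hy. apply sum_growing. intros i.
  apply Rmult_le_compat_r; [apply pow_le, Hy | apply Hc].
Qed.

Lemma ln_div_one_minus_ge (v : R) : 0 <= v < 1 -> 2 * v <= ln ((1 + v) / (1 - v)).
Proof.
  intros Hv.
  replace (2 * v) with (ln ((1 + 0) / (1 - 0)) + 2 / (1 - 0 ^ 2) * (v - 0))
    by (replace ((1 + 0) / (1 - 0)) with 1 by field; rewrite ln_1; field).
  apply (tangent_le_of_deriv_nondecr (fun v => ln ((1 + v) / (1 - v)))
           (fun v => 2 / (1 - v ^ 2)) 0 v); try lra.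
  - intros z Hz. apply is_derive_Reals. auto_derive.
    + repeat split; try apply Rdiv_lt_0_compat; lra.
    + field. repeat split; nra.
  - intros u w Hu Huw Hw. apply Rmult_le_compat_l; [lra|].
    apply Rinv_le_contravar; nra.
Qed.

Lemma fact_le_exp (j : nat) : (1 <= j)%nat ->
  INR (fact j) <= exp (1 - INR j + (INR j + / 2) * ln (INR j)).
Proof.
  intros Hj. destruct j as [|j]; [lia|]. clear Hj.
  induction j as [|j IH].
  - simpl. rewrite ln_1. replace (1 - 1 + (1 + / 2) * 0) with 0 by ring. rewrite exp_0. lra.
  - set (n := INR (S j)) in *.
    assert (Hn : 1 <= n) by (unfold n; rewrite S_INR; pose proof (pos_INR j); lra).
    assert (Hkey : 1 <= (n + / 2) * ln ((n + 1) / n)).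
    { set (v := / (2 * n + 1)).
      assert (Hv : 0 <= v < 1).
      { unfold v. split; [apply Rlt_le, Rinv_0_lt_compat; lra|].
        rewrite <- Rinv_1. apply Rinv_lt_contravar; lra. }
      replace ((n + 1) / n) with ((1 + v) / (1 - v)) by (unfold v; field; lra).
      pose proof (ln_div_one_minus_ge v Hv).
      replace 1 with ((n + / 2) * (2 * v)) at 1 by (unfold v; field; lra).
      apply Rmult_le_compat_l; lra. }
    rewrite ln_div in Hkey by lra.
    rewrite fact_simpl, mult_INR, (S_INR (S j)). fold n.
    replace (n + 1) with (exp (ln (n + 1))) at 1 by (apply exp_ln; lra).
    apply Rle_trans with (exp (ln (n + 1)) * exp (1 - n + (n + / 2) * ln n)).
    { apply Rmult_le_compat_l; [apply Rlt_le, exp_pos | exact IH]. }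
    rewrite <- exp_plus. apply exp_le. nra.
Qed.

Lemma fact_pow_le_fact4 (j : nat) (y : R) : (4 <= j)%nat -> 0 <= y -> INR j * y <= 1 ->
  INR (fact j) * y ^ j <= 24 * y ^ 4.
Proof.
  intros Hj Hy. replace j with (4 + (j - 4))%nat by lia. generalize (j - 4)%nat as d.
  induction d as [|d IH]; intros Hd; [simpl; lra|].
  replace (4 + S d)%nat with (S (4 + d)) in * by lia.
  assert (Hd' : INR (4 + d) * y <= 1)
    by (rewrite S_INR in Hd; pose proof (pos_INR (4 + d)); nra).
  specialize (IH Hd').
  rewrite fact_simpl, mult_INR, <- tech_pow_Rmult.
  assert (0 <= INR (fact (4 + d)) * y ^ (4 + d)) by (apply Rmult_le_pos; [apply pos_INR | apply pow_le, Hy]).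
  nra.
Qed.

(* The value of x/(1-x) at which x - Lambda_k(x) is evaluated: (e/k) k^(-5/(2k)). *)
Definition probe (k : nat) : R := exp 1 * exp (- (5 / 2 * (ln (INR k) / INR k))) / INR k.

Lemma probe_pos (k : nat) : (1 <= k)%nat -> 0 < probe k.
Proof.
  intros Hk. assert (1 <= INR k) by (apply (le_INR 1), Hk).
  apply Rdiv_lt_0_compat; [apply Rmult_lt_0_compat; apply exp_pos | lra].
Qed.

Lemma probe_bounds (k : nat) : (1 <= k)%nat ->
  exp 1 / INR k * (1 - 5 / 2 * (ln (INR k) / INR k)) <= probe k <= exp 1 / INR k.
Proof.
  intros Hk. assert (Hkr : 1 <= INR k) by (apply (le_INR 1), Hk).
  set (L := 5 / 2 * (ln (INR k) / INR k)).
  assert (HL : 0 <= L).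
  { assert (0 <= ln (INR k)) by (rewrite <- ln_1; apply ln_le; lra).
    apply Rmult_le_pos; [lra | apply Rdiv_le_0_compat; lra]. }
  assert (Hp : 1 - L <= exp (- L) <= 1).
  { split; [pose proof (exp_ineq1_le (- L)); lra|]. rewrite <- exp_0. apply exp_le; lra. }
  assert (He : 0 <= exp 1 / INR k) by (apply Rdiv_le_0_compat; [apply Rlt_le, exp_pos | lra]).
  unfold probe. fold L.
  replace (exp 1 * exp (- L) / INR k) with (exp 1 / INR k * exp (- L)) by (field; lra).
  split; [apply Rmult_le_compat_l; lra|].
  rewrite <- (Rmult_1_r (exp 1 / INR k)) at 2. apply Rmult_le_compat_l; lra.
Qed.

Lemma fact_pow_le_geometric (k j : nat) :
  (1 <= j <= k)%nat -> INR k <= 3 * INR j -> 30 * ln (INR k) <= INR k ->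
  INR (fact j) * probe k ^ j <= exp 1 / INR k ^ 2 * exp (- / 4) ^ (k - j).
Proof.
  intros Hj H3 Hln. unfold probe.
  set (kr := INR k) in *. set (n := INR j) in *.
  assert (Hn : 1 <= n) by (unfold n; apply (le_INR 1); lia).
  assert (Hnk : n <= kr) by (unfold n, kr; apply le_INR; lia).
  assert (Hm : INR (k - j) = kr - n) by (unfold kr, n; apply minus_INR; lia).
  set (L := 5 / 2 * (ln kr / kr)).
  replace (exp 1 * exp (- L) / kr) with (exp (1 - L - ln kr))
    by (unfold Rminus; rewrite !exp_plus, (exp_Ropp (ln kr)), exp_ln by lra; field; lra).
  replace (exp 1 / kr ^ 2) with (exp (1 - 2 * ln kr))
    by (replace (1 - 2 * ln kr) with (1 + - (ln kr + ln kr)) by ring;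
        rewrite exp_plus, exp_Ropp, exp_plus, exp_ln by lra; field; lra).
  rewrite !exp_pow, Hm. fold n.
  apply Rle_trans with (exp (1 - n + (n + / 2) * ln n) * exp (n * (1 - L - ln kr))).
  { apply Rmult_le_compat_r; [apply Rlt_le, exp_pos | apply fact_le_exp; lia]. }
  rewrite <- !exp_plus. apply exp_le.
  (* with m = k - j: n ln (n/k) <= -m n/k, and n L = (5/2) ln k - m L, so the exponent
     is at most -2 ln k - m (n/k - L) <= -2 ln k - m/4 *)
  pose proof (ln_le_sub_1 (n / kr) ltac:(apply Rdiv_lt_0_compat; lra)) as Hratio.
  rewrite ln_div in Hratio by lra.
  pose proof (ln_le n kr ltac:(lra) Hnk).
  assert (HL : L * kr = 5 / 2 * ln kr) by (unfold L; field; lra).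
  assert (Hq : 1 / 3 <= n / kr)
    by (apply Rmult_le_reg_r with kr; [lra|]; replace (n / kr * kr) with n by (field; lra); lra).
  assert (HL12 : L <= 1 / 12) by (apply Rmult_le_reg_r with kr; [lra|]; lra).
  assert (Hnl : n * (ln n - ln kr) <= n * (n / kr - 1)) by (apply Rmult_le_compat_l; lra).
  replace (n * (n / kr - 1)) with (- (kr - n) * (n / kr)) in Hnl by (field; lra).
  assert (0 <= (kr - n) * (n / kr - L - / 4)) by (apply Rmult_le_pos; lra).
  nra.
Qed.

Lemma fact_probe_pow_le (k j : nat) : (4 <= j <= k)%nat -> 30 * ln (INR k) <= INR k ->
  INR (fact j) * probe k ^ j
  <= exp 1 / INR k ^ 2 * exp (- / 4) ^ (k - j) + 24 * (exp 1 / INR k) ^ 4.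
Proof.
  intros Hj Hln.
  pose proof (probe_pos k ltac:(lia)). destruct (probe_bounds k ltac:(lia)) as [_ Hup].
  pose proof exp_le_3. pose proof (exp_pos 1).
  assert (Hk : 4 <= INR k) by (replace 4 with (INR 4) by (simpl; lra); apply le_INR; lia).
  assert (0 <= exp 1 / INR k ^ 2 * exp (- / 4) ^ (k - j))
    by (apply Rmult_le_pos; [apply Rdiv_le_0_compat; [lra | apply pow_lt; lra] | apply pow_le, Rlt_le, exp_pos]).
  assert (0 <= 24 * (exp 1 / INR k) ^ 4)
    by (apply Rmult_le_pos; [lra | apply pow_le, Rdiv_le_0_compat; lra]).
  destruct (Rle_lt_dec (INR k) (3 * INR j)) as [Hbig | Hsmall].
  - pose proof (fact_pow_le_geometric k j ltac:(lia) Hbig Hln). lra.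
  - assert (24 * probe k ^ 4 <= 24 * (exp 1 / INR k) ^ 4)
      by (apply Rmult_le_compat_l; [lra | apply pow_incr; lra]).
    enough (INR (fact j) * probe k ^ j <= 24 * probe k ^ 4) by lra.
    apply fact_pow_le_fact4; [lia | lra |].
    apply Rle_trans with (INR j * (exp 1 / INR k)); [apply Rmult_le_compat_l; [apply pos_INR | lra]|].
    apply Rmult_le_reg_r with (INR k); [lra|].
    replace (INR j * (exp 1 / INR k) * INR k) with (INR j * exp 1) by (field; lra).
    pose proof (pos_INR j). nra.
Qed.

Lemma exp_neg_quarter_le : exp (- / 4) <= 4 / 5.
Proof.
  rewrite exp_Ropp. pose proof (exp_ineq1_le (/ 4)).
  replace (4 / 5) with (/ (5 / 4)) by field. apply Rinv_le_contravar; lra.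
Qed.

Lemma pow4_series_fact_le (k : nat) :
  (4 <= k)%nat -> 24 * exp 1 ^ 3 <= INR k -> 30 * ln (INR k) <= INR k ->
  pow4_series (fun i => INR (fact (i + 4))) (k - 4) (probe k) <= 6 * exp 1 / INR k ^ 2.
Proof.
  intros Hk Hk3 Hln.
  set (kr := INR k) in *. set (r := exp (- / 4)).
  pose proof (exp_pos 1).
  assert (Hkr : 4 <= kr) by (unfold kr; replace 4 with (INR 4) by (simpl; lra); apply le_INR, Hk).
  assert (Hr : 0 <= r <= 4 / 5) by (split; [apply Rlt_le, exp_pos | apply exp_neg_quarter_le]).
  set (a4 := 24 * (exp 1 / kr) ^ 4).
  assert (Ha4 : 0 <= a4) by (apply Rmult_le_pos; [lra | apply pow_le; apply Rdiv_le_0_compat; lra]).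
  assert (Hek : 0 <= exp 1 / kr ^ 2) by (apply Rdiv_le_0_compat; [lra | apply pow_lt; lra]).
  apply Rle_trans with (sum_f_R0 (fun i => exp 1 / kr ^ 2 * r ^ ((k - 4) - i) + a4) (k - 4)).
  { apply sum_Rle. intros i Hi. replace ((k - 4) - i)%nat with (k - (i + 4))%nat by lia.
    apply fact_probe_pow_le; [lia | exact Hln]. }
  rewrite sum_plus, sum_cte.
  replace (sum_f_R0 (fun i => exp 1 / kr ^ 2 * r ^ (k - 4 - i)) (k - 4))
    with (exp 1 / kr ^ 2 * sum_f_R0 (fun i => r ^ (k - 4 - i)) (k - 4))
    by (rewrite scal_sum; apply sum_eq; intros; ring).
  assert (Hgeom : sum_f_R0 (fun i => r ^ (k - 4 - i)) (k - 4) <= 5).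
  { apply Rle_trans with (/ (1 - r)); [apply sum_pow_rev_le; lra|].
    replace 5 with (/ (1 - 4 / 5)) by field. apply Rinv_le_contravar; lra. }
  assert (Hcount : a4 * INR (S (k - 4)) <= exp 1 / kr ^ 2).
  { assert (INR (S (k - 4)) <= kr) by (apply le_INR; lia).
    apply Rle_trans with (a4 * kr); [apply Rmult_le_compat_l; lra|].
    unfold a4. replace (24 * (exp 1 / kr) ^ 4 * kr) with (24 * exp 1 ^ 3 / kr * (exp 1 / kr ^ 2))
      by (field; lra).
    rewrite <- (Rmult_1_l (exp 1 / kr ^ 2)) at 2. apply Rmult_le_compat_r; [lra|].
    apply Rmult_le_reg_r with kr; [lra|].
    replace (24 * exp 1 ^ 3 / kr * kr) with (24 * exp 1 ^ 3) by (field; lra). lra. }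
  assert (exp 1 / kr ^ 2 * sum_f_R0 (fun i => r ^ (k - 4 - i)) (k - 4) <= exp 1 / kr ^ 2 * 5)
    by (apply Rmult_le_compat_l; lra).
  replace (6 * exp 1 / kr ^ 2) with (exp 1 / kr ^ 2 * 5 + exp 1 / kr ^ 2) by (field; lra).
  lra.
Qed.

Lemma Lambda_probe_le (k : nat) :
  (4 <= k)%nat -> 24 * exp 1 ^ 3 <= INR k -> 30 * ln (INR k) <= INR k ->
  Lambda k (probe k / (1 + probe k))
  <= probe k ^ 2 / (1 + probe k) + 6 * exp 1 / INR k ^ 2.
Proof.
  intros Hk4 Hk3 Hln. pose proof (probe_pos k ltac:(lia)) as Hy.
  rewrite Lambda_as_Lambda_c. unfold Lambda_c.
  replace (probe k / (1 + probe k) / (1 - probe k / (1 + probe k))) with (probe k)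
    by (field; lra).
  replace ((probe k / (1 + probe k)) ^ 2 / (1 - probe k / (1 + probe k)))
    with (probe k ^ 2 / (1 + probe k)) by (field; lra).
  apply Rplus_le_compat_l.
  apply Rle_trans with (pow4_series (fun i => INR (fact (i + 4))) (k - 4) (probe k)).
  - apply pow4_series_coef_le; [intros i; apply le_INR, s_simple_le_fact | lra].
  - apply pow4_series_fact_le; assumption.
Qed.

Lemma ln_le_of_ge_10000 (x : R) : 10000 <= x -> 30 * ln x <= x /\ (5 / 2 * ln x + 220) ^ 2 <= 16 * x.
Proof.
  intros Hx.
  set (s := sqrt (sqrt x)).
  assert (Hs4 : x = s ^ 4).
  { unfold s. replace (sqrt (sqrt x) ^ 4) with ((sqrt (sqrt x) * sqrt (sqrt x)) ^ 2) by ring.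
    rewrite sqrt_sqrt by apply sqrt_pos. rewrite pow2_sqrt; lra. }
  assert (Hs : 10 <= s).
  { unfold s. replace 10 with (sqrt (sqrt 10000)); [apply sqrt_le_1_alt, sqrt_le_1_alt; lra|].
    replace 10000 with ((10 * 10) * (10 * 10)) by ring. rewrite !sqrt_square; lra. }
  clearbody s.
  assert (Hln : ln x <= 4 * s).
  { rewrite Hs4, ln_pow by lra. pose proof (ln_le_sub_1 s ltac:(lra)). simpl (INR 4). lra. }
  assert (0 <= ln x) by (rewrite <- ln_1; apply ln_le; lra).
  assert (Hs2 : 100 <= s ^ 2) by nra.
  split.
  - assert (120 * s <= s ^ 4) by (replace (s ^ 4) with (s ^ 2 * s ^ 2) by ring; nra). lra.
  - assert (5 / 2 * ln x + 220 <= 4 * s ^ 2) by nra.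
    replace (16 * x) with ((4 * s ^ 2) ^ 2) by (rewrite Hs4; ring). apply pow_incr; lra.
Qed.

Lemma correction_factor_ge_1 (x : R) : 10000 <= x ->
  1 <= (1 - 32 * (exp 1 / x)) ^ 2 * (1 - 5 / 2 * (ln x / x) - 12 / x)
       * (1 + 5 / 2 * (ln x / x) + 220 / x).
Proof.
  intros Hx. destruct (ln_le_of_ge_10000 x Hx) as [_ Hsq].
  pose proof exp_le_3. pose proof (exp_pos 1).
  assert (0 <= ln x) by (rewrite <- ln_1; apply ln_le; lra).
  set (u := 5 / 2 * ln x) in *. set (t := / x).
  assert (Ht : 0 < t <= / 10000) by (split; [apply Rinv_0_lt_compat | apply Rinv_le_contravar]; lra).
  assert (Hxt : x * t = 1) by (unfold t; field; lra).
  assert (Hu : 0 <= u) by (unfold u; lra).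
  replace (5 / 2 * (ln x / x)) with (u * t) by (unfold u, t; field; lra).
  replace (exp 1 / x) with (exp 1 * t) by (unfold t; field; lra).
  replace (12 / x) with (12 * t) by (unfold t; field; lra).
  replace (220 / x) with (220 * t) by (unfold t; field; lra).
  assert (Hprod : (u + 204) * (u + 220) * t <= 16).
  { assert ((u + 204) * (u + 220) <= 16 * x) by nra.
    apply Rle_trans with (16 * x * t); [apply Rmult_le_compat_r; lra|].
    rewrite Rmult_assoc, Hxt; lra. }
  assert (Hexp : 1 - 192 * t <= (1 - 32 * (exp 1 * t)) ^ 2) by nra.
  assert (Hlow : 0 <= 1 - u * t - 12 * t) by nra.
  apply Rle_trans with ((1 - 192 * t) * (1 - u * t - 12 * t) * (1 + u * t + 220 * t)).
  - assert (0 <= 192 * t * (u * t + 12 * t)) by (apply Rmult_le_pos; nra). nra.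
  - apply Rmult_le_compat_r; [nra|]. apply Rmult_le_compat_r; [lra | exact Hexp].
Qed.

Lemma gap_ratio_bounds (x : R) : 10000 <= x ->
  0 < 1 - 5 / 2 * (ln x / x) - 12 / x <= 1.
Proof.
  intros Hx. destruct (ln_le_of_ge_10000 x Hx) as [Hln _].
  assert (0 <= ln x) by (rewrite <- ln_1; apply ln_le; lra).
  assert (5 / 2 * (ln x / x) <= 1 / 12)
    by (apply Rmult_le_reg_r with x; [lra|]; replace (5 / 2 * (ln x / x) * x) with (5 / 2 * ln x) by (field; lra); lra).
  assert (0 <= ln x / x) by (apply Rdiv_le_0_compat; lra).
  assert (12 / x <= 12 / 10000) by (apply Rmult_le_compat_l; [lra | apply Rinv_le_contravar; lra]).
  assert (0 <= 12 / x) by (apply Rdiv_le_0_compat; lra).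
  lra.
Qed.

Lemma saddle_gap_ge (k : nat) (t : R) :
  (4 <= k)%nat -> 10000 <= INR k -> 0 <= t < 1 ->
  dLambda_c s_coef (k - 4) t = 1 ->
  exp 1 / INR k * (1 - 5 / 2 * (ln (INR k) / INR k) - 12 / INR k) <= t - Lambda k t.
Proof.
  intros Hk4 Hk Ht Hd.
  destruct (ln_le_of_ge_10000 (INR k) Hk) as [Hln _].
  pose proof exp_le_3. pose proof (exp_pos 1).
  assert (He3 : exp 1 ^ 3 <= 27) by (replace 27 with (3 ^ 3) by ring; apply pow_incr; lra).
  pose proof (Lambda_probe_le k Hk4 ltac:(lra) Hln) as Hupper.
  pose proof (probe_pos k ltac:(lia)) as Hy0. destruct (probe_bounds k ltac:(lia)) as [Hlow Hup].
  set (kr := INR k) in *. set (y := probe k) in *.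
  set (x0 := y / (1 + y)) in *.
  assert (Hx0 : 0 <= x0 < 1).
  { unfold x0. split; [apply Rdiv_le_0_compat; lra|].
    apply Rmult_lt_reg_r with (1 + y); [lra|].
    replace (y / (1 + y) * (1 + y)) with y by (field; lra). lra. }
  (* slope 1 at [t] makes [t - Lambda t] the maximum of [x - Lambda x] *)
  pose proof (Lambda_c_tangent s_coef (k - 4) s_coef_ge0 x0 t Hx0 Ht) as Htan.
  rewrite Hd, <- Lambda_as_Lambda_c in Htan.
  assert (Hx0y : y - 2 * y ^ 2 <= x0 - y ^ 2 / (1 + y)).
  { replace (x0 - y ^ 2 / (1 + y)) with ((y - y ^ 2) / (1 + y)) by (unfold x0; field; lra).
    apply Rmult_le_reg_r with (1 + y); [lra|].
    replace ((y - y ^ 2) / (1 + y) * (1 + y)) with (y - y ^ 2) by (field; lra). nra. }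
  assert (Hy2 : 2 * y ^ 2 <= 6 * exp 1 / kr ^ 2).
  { replace (6 * exp 1 / kr ^ 2) with (2 * (3 * (exp 1 / kr ^ 2))) by (field; lra).
    apply Rmult_le_compat_l; [lra|].
    apply Rle_trans with ((exp 1 / kr) ^ 2); [apply pow_incr; lra|].
    replace ((exp 1 / kr) ^ 2) with (exp 1 * (exp 1 / kr ^ 2)) by (field; lra).
    apply Rmult_le_compat_r; [apply Rdiv_le_0_compat; [lra | apply pow_lt; lra] | lra]. }
  replace (exp 1 / kr * (1 - 5 / 2 * (ln kr / kr) - 12 / kr))
    with (exp 1 / kr * (1 - 5 / 2 * (ln kr / kr)) - 6 * exp 1 / kr ^ 2 - 6 * exp 1 / kr ^ 2)
    by (field; lra).
  lra.
Qed.

Lemma gamma_factor_le (rho tau L2 : R) :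
  0 < rho <= 1 / 4 -> tau <= 2 * rho -> 2 <= L2 ->
  sqrt (rho / (2 * PI * L2)) / (1 - tau) ^ 2 <= sqrt (rho / (4 * PI)) / (1 - 2 * rho) ^ 2.
Proof.
  intros Hrho Htau HL2. pose proof PI_RGT_0.
  unfold Rdiv. apply Rmult_le_compat.
  - apply sqrt_pos.
  - apply Rlt_le, Rinv_0_lt_compat, pow_lt; lra.
  - apply sqrt_le_1_alt, Rmult_le_compat_l; [lra|]. apply Rinv_le_contravar; nra.
  - apply Rinv_le_contravar; [apply pow_lt; lra | apply pow_incr; lra].
Qed.

Lemma sqrt_pow_sq_le (r0 rho : R) (m : nat) :
  0 < r0 <= rho -> rho <= 1 / 4 -> 32 * r0 < 1 ->
  sqrt r0 * r0 ^ m * (1 - 32 * r0) ^ 2 <= sqrt rho * rho ^ m * (1 - 2 * rho) ^ 2.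
Proof.
  intros Hr Hrho H32.
  assert (Hs0 : 0 <= sqrt r0) by apply sqrt_pos.
  assert (Hpm : 0 <= r0 ^ m <= rho ^ m) by (split; [apply pow_le | apply pow_incr]; lra).
  destruct (Rle_lt_dec rho (16 * r0)) as [Hnear | Hfar].
  - apply Rmult_le_compat; [apply Rmult_le_pos; lra | apply pow2_ge_0 | |].
    + apply Rmult_le_compat; try lra. apply sqrt_le_1_alt; lra.
    + apply pow_incr; lra.
  - (* far from [r0], the factor [sqrt rho >= 4 sqrt r0] pays for [(1 - 2 rho)^2 >= 1/4] *)
    assert (Hsq : 4 * sqrt r0 <= sqrt rho).
    { replace (4 * sqrt r0) with (sqrt (16 * r0)); [apply sqrt_le_1_alt; lra|].
      rewrite sqrt_mult_alt by lra. replace 16 with (4 * 4) by ring.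
      rewrite sqrt_square; lra. }
    assert ((1 - 32 * r0) ^ 2 <= 1) by nra.
    assert (1 / 4 <= (1 - 2 * rho) ^ 2) by nra.
    assert (0 <= sqrt r0 * r0 ^ m) by nra.
    apply Rle_trans with (sqrt r0 * r0 ^ m); [nra|].
    apply Rle_trans with (4 * sqrt r0 * r0 ^ m * (1 / 4)); [lra|].
    apply Rmult_le_compat; try nra.
Qed.

Lemma correction_pow_ge (q a B : R) (m : nat) :
  0 < q <= 1 -> 0 < a -> 32 * a < 1 -> 1 <= (1 - 32 * a) ^ 2 * q * B ->
  (1 - a) ^ 2 <= sqrt q * q ^ m * (1 - 32 * (q * a)) ^ 2 * B ^ S m.
Proof.
  intros Hq Ha H32 HB.
  assert (Hw : (1 - 32 * a) ^ 2 <= (1 - 32 * (q * a)) ^ 2) by (apply pow_incr; nra).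
  assert (Hw1 : (1 - 32 * a) ^ 2 <= 1) by nra.
  assert (Hw0 : 0 < (1 - 32 * a) ^ 2) by (apply pow_lt; lra).
  assert (HqB : 1 <= q * B) by nra.
  assert (HqBm : q * B <= (q * B) ^ S m).
  { rewrite <- tech_pow_Rmult. rewrite <- (Rmult_1_r (q * B)) at 1.
    apply Rmult_le_compat_l; [lra | apply pow_R1_Rle; lra]. }
  assert (Hsq : q <= sqrt q).
  { rewrite <- (sqrt_square q) at 1 by lra. apply sqrt_le_1_alt. nra. }
  assert (Hqm : 0 < q ^ m) by (apply pow_lt; lra).
  apply Rle_trans with ((1 - 32 * (q * a)) ^ 2 * (q * B) ^ S m).
  - assert ((1 - a) ^ 2 <= 1) by nra.
    assert ((1 - 32 * a) ^ 2 * (q * B) <= (1 - 32 * (q * a)) ^ 2 * (q * B) ^ S m)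
      by (apply Rmult_le_compat; lra).
    lra.
  - rewrite Rpow_mult_distr.
    assert (Hqs : q ^ S m <= sqrt q * q ^ m) by (simpl; apply Rmult_le_compat_r; lra).
    assert (0 <= B ^ S m) by (apply pow_le; nra).
    replace (sqrt q * q ^ m * (1 - 32 * (q * a)) ^ 2 * B ^ S m)
      with ((1 - 32 * (q * a)) ^ 2 * (sqrt q * q ^ m * B ^ S m)) by ring.
    apply Rmult_le_compat_l; [apply pow2_ge_0 | apply Rmult_le_compat_r; lra].
Qed.

Lemma saddle_term_le_weight (rho tau L2 : R) (m : nat) :
  0 < rho <= 1 / 4 -> tau <= 2 * rho -> 2 <= L2 ->
  sqrt (rho / (2 * PI * L2)) / (1 - tau) ^ 2 * / rho ^ S m
  <= sqrt (/ (4 * PI)) / (sqrt rho * rho ^ m * (1 - 2 * rho) ^ 2).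
Proof.
  intros Hrho Htau HL2. pose proof PI_RGT_0.
  assert (Hsr : 0 < sqrt rho) by (apply sqrt_lt_R0; lra).
  apply Rle_trans with (sqrt (rho / (4 * PI)) / (1 - 2 * rho) ^ 2 * / rho ^ S m).
  - apply Rmult_le_compat_r; [apply Rlt_le, Rinv_0_lt_compat, pow_lt; lra|].
    apply gamma_factor_le; assumption.
  - right.
    replace (sqrt (rho / (4 * PI))) with (sqrt rho * sqrt (/ (4 * PI)))
      by (symmetry; apply sqrt_mult_alt; lra).
    replace (rho ^ S m) with (sqrt rho * (sqrt rho * rho ^ m))
      by (simpl; rewrite <- Rmult_assoc, sqrt_sqrt; lra).
    field. repeat split; try lra; apply pow_nonzero; lra.
Qed.

Lemma saddle_term_le (rho tau L2 q a B : R) (m : nat) :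
  q * a <= rho <= 1 / 4 -> tau <= 2 * rho -> 2 <= L2 ->
  0 < q <= 1 -> 0 < a -> 32 * a < 1 -> 1 <= (1 - 32 * a) ^ 2 * q * B ->
  sqrt (rho / (2 * PI * L2)) / (1 - tau) ^ 2 * / rho ^ S m
  <= 1 / (1 - a) ^ 2 * sqrt (a / (4 * PI)) * (/ a) ^ S m * B ^ S m.
Proof.
  intros Hrho Htau HL2 Hq Ha H32 HB. pose proof PI_RGT_0.
  set (c := sqrt (/ (4 * PI))).
  assert (Hc : 0 < c) by (apply sqrt_lt_R0, Rinv_0_lt_compat; lra).
  assert (Hsa : 0 < sqrt a) by (apply sqrt_lt_R0; lra).
  assert (Hsq : 0 < sqrt q) by (apply sqrt_lt_R0; lra).
  pose proof (sqrt_pow_sq_le (q * a) rho m ltac:(nra) ltac:(lra) ltac:(nra)) as Hw.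
  rewrite sqrt_mult_alt in Hw by lra.
  set (W := sqrt q * sqrt a * (q * a) ^ m * (1 - 32 * (q * a)) ^ 2) in Hw.
  assert (HW : 0 < W)
    by (apply Rmult_lt_0_compat; [apply Rmult_lt_0_compat; [nra | apply pow_lt; nra] | apply pow_lt; nra]).
  apply Rle_trans with (c / W).
  { eapply Rle_trans; [apply saddle_term_le_weight; nra|].
    unfold Rdiv. apply Rmult_le_compat_l; [lra|]. apply Rinv_le_contravar; assumption. }
  assert (Hpow : 0 < (1 - a) ^ 2) by (apply pow_lt; lra).
  replace (1 / (1 - a) ^ 2 * sqrt (a / (4 * PI)) * (/ a) ^ S m * B ^ S m)
    with (c / W * (sqrt q * q ^ m * (1 - 32 * (q * a)) ^ 2 * B ^ S m / (1 - a) ^ 2)).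
  2: { replace (sqrt (a / (4 * PI))) with (sqrt a * c) by (symmetry; apply sqrt_mult_alt; lra).
       unfold W. rewrite pow_inv, Rpow_mult_distr.
       replace (a ^ S m) with (sqrt a * (sqrt a * a ^ m))
         by (simpl; rewrite <- Rmult_assoc, sqrt_sqrt; lra).
       field. repeat split; try nra; apply pow_nonzero; nra. }
  rewrite <- (Rmult_1_r (c / W)) at 1.
  apply Rmult_le_compat_l; [apply Rlt_le, Rdiv_lt_0_compat; lra|].
  apply Rmult_le_reg_r with ((1 - a) ^ 2); [lra|].
  unfold Rdiv. rewrite Rmult_assoc, Rinv_l by lra.
  pose proof (correction_pow_ge q a B m Hq Ha H32 HB). lra.
Qed.

Theorem mainTheorem13 :
  forall (tau : nat -> R) (L1 : nat -> R -> R) (L2 : nat -> R),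
    (forall k : nat, (4 <= k)%nat ->
       (forall x : R, 0 < x < 1 -> derivable_pt_lim (Lambda k) x (L1 k x)) /\
       0 < tau k < 1 /\
       L1 k (tau k) = 1 /\
       derivable_pt_lim (L1 k) (tau k) (L2 k)) ->
    exists (C : R) (K : nat), C > 0 /\
      forall k n : nat, (K <= k)%nat -> (4 <= k)%nat -> (1 <= n)%nat ->
        let rho := tau k - Lambda k (tau k) in
        let gamma := sqrt (rho / (2 * PI * L2 k)) in
        gamma / (1 - tau k) ^ 2 * / rho ^ n * Rpower (INR n) (- (3 / 2))
        <= 1 / (1 - exp 1 / INR k) ^ 2 * sqrt (exp 1 / (4 * PI * INR k))
           * (INR k / exp 1) ^ n
           * (1 + 5 / 2 * (ln (INR k) / INR k) + C / INR k) ^ n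
           * Rpower (INR n) (- (3 / 2)).
Proof.
  intros tau L1 L2 Hsaddle.
  exists 220, 10000%nat. split; [lra|].
  intros k n HK Hk4 Hn. cbv zeta.
  destruct (Hsaddle k Hk4) as [HL1 [Htau [Hslope HL2]]].
  rewrite Lambda_as_Lambda_c in HL1.
  assert (Hk : 10000 <= INR k)
    by (replace 10000 with (INR 10000) by (rewrite INR_IZR_INZ; reflexivity); apply le_INR, HK).
  assert (Hd : dLambda_c s_coef (k - 4) (tau k) = 1)
    by (rewrite <- Hslope; symmetry; apply derivative_Lambda_c_eq, Htau; exact HL1).
  pose proof (saddle_gap_ge k (tau k) Hk4 Hk ltac:(lra) Hd) as Hgap.
  destruct (Lambda_c_saddle s_coef (k - 4) s_coef_ge0 (tau k) ltac:(lra) Hd) as [Htau2 Hrho4].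
  pose proof (Lambda_c_second_deriv_ge s_coef (k - 4) s_coef_ge0 _ _ _ HL1 Htau HL2) as HL2ge.
  rewrite <- Lambda_as_Lambda_c in Htau2, Hrho4.
  pose proof (gap_ratio_bounds (INR k) Hk) as Hq.
  pose proof (correction_factor_ge_1 (INR k) Hk) as HB.
  pose proof exp_le_3. pose proof (exp_pos 1). pose proof PI_RGT_0.
  apply Rmult_le_compat_r; [apply Rlt_le, exp_pos|].
  destruct n as [|m]; [lia|].
  replace (exp 1 / (4 * PI * INR k)) with (exp 1 / INR k / (4 * PI)) by (field; lra).
  replace (INR k / exp 1) with (/ (exp 1 / INR k)) by (field; lra).
  apply (saddle_term_le _ _ _ (1 - 5 / 2 * (ln (INR k) / INR k) - 12 / INR k)); try lra.
  - apply Rdiv_lt_0_compat; lra.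
  - apply Rmult_lt_reg_r with (INR k); [lra|].
    replace (32 * (exp 1 / INR k) * INR k) with (32 * exp 1) by (field; lra). lra.
Qed.
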